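(* Assume the setup in the context, with the fine-tuning regime, and let $0<\epsilon\le 1$ be such that $|\langle\tau_i,\tau_j\rangle|\le\epsilon\|\tau_i\|\|\tau_j\|$ for all $i\neq j$. Let $\mathbf{T}=[\tau_1,\dots,\tau_T]\in\mathbb{R}^{d\times T}$, let $\mathbf{W}_e\in\mathbb{R}^{T\times M}$ and $\mathbf{W}_d\in\mathbb{R}^{M\times T}$ be arbitrary, and let $\hat{\mathbf{T}}=\mathbf{T}\mathbf{W}_e\mathbf{W}_d$ with $i$-th column $\hat\tau_i$ and column error $e_i=\hat\tau_i-\tau_i$. Fix $i\in[T]$ and $\alpha_i\in[0,1]$, let $\theta_{\mathrm{Neg},i}=\theta_0-\alpha_i\hat\tau_i$, and assume local smoothness holds with radius $r\ge 2\sqrt{C}+\|e_i\|$. Then for every $j\in[T]$ with $j\neq i$, $$\mathcal{L}_j(\theta_{\mathrm{Neg},i})-\mathcal{L}_j(\theta_0)\le L_jC\Big(\frac{5}{2}+2\epsilon\Big)+L_j\|e_i\|^2.$$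
   Context: Setup: $\theta_0\in\mathbb{R}^d$ is a pretrained parameter vector; $\theta_1,\dots,\theta_T\in\mathbb{R}^d$ are fine-tuned parameters and $\tau_i:=\theta_i-\theta_0$ are task vectors. For each task $i$, $\mathcal{L}_i:\mathbb{R}^d\to\mathbb{R}$ is a differentiable loss (population risk). Norms are Euclidean. Fine-tuning regime: $\nabla\mathcal{L}_i(\theta_i)=0$ for all $i\in[T]$, and there is $C>0$ with $\|\tau_i\|^2\le C$ for all $i$. Local smoothness with radius $r>0$: for each $i$ there is $L_i\ge 0$ such that for all $\theta$ with $\|\theta-\theta_i\|\le r$, $\big|\mathcal{L}_i(\theta)-\mathcal{L}_i(\theta_i)-\langle\theta-\theta_i,\nabla\mathcal{L}_i(\theta_i)\rangle\big|\le\frac{L_i}{2}\|\theta-\theta_i\|^2$. $\hat{\mathbf{T}}$ is the task-vector matrix reconstructed from the basis $\mathbf{B}=\mathbf{T}\mathbf{W}_e$ via the decoder $\mathbf{W}_d$. *)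

From HB Require Import structures.
From mathcomp Require Import all_boot all_order all_algebra.
From mathcomp Require Import all_classical all_reals all_analysis.
Set Implicit Arguments. Unset Strict Implicit. Unset Printing Implicit Defensive.
Import Order.TTheory GRing.Theory Num.Theory.
Import numFieldNormedType.Exports.
Local Open Scope ring_scope.

Definition dotv (R : realType) (d : nat) (u v : 'cV[R]_d) : R :=
  \sum_(k < d) u k ord0 * v k ord0.
Definition enorm (R : realType) (d : nat) (u : 'cV[R]_d) : R :=
  Num.sqrt (dotv u u).

Definition grad (R : realType) (d : nat) (f : 'cV[R]_d -> R) (x : 'cV[R]_d)
  : 'cV[R]_d :=
  \col_(k < d) derive f x (delta_mx k ord0).

Definition tau (R : realType) (d nT : nat) (theta0 : 'cV[R]_d)
  (theta : 'I_nT -> 'cV[R]_d) (k : 'I_nT) : 'cV[R]_d := theta k - theta0.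

Definition taskmx (R : realType) (d nT : nat) (theta0 : 'cV[R]_d)
  (theta : 'I_nT -> 'cV[R]_d) : 'M[R]_(d, nT) :=
  \matrix_(a < d, k < nT) tau theta0 theta k a ord0.

Definition tauhat (R : realType) (d nT M : nat) (theta0 : 'cV[R]_d)
  (theta : 'I_nT -> 'cV[R]_d) (We : 'M[R]_(nT, M)) (Wd : 'M[R]_(M, nT))
  (k : 'I_nT) : 'cV[R]_d :=
  col k (taskmx theta0 theta *m We *m Wd).

Definition colerr (R : realType) (d nT M : nat) (theta0 : 'cV[R]_d)
  (theta : 'I_nT -> 'cV[R]_d) (We : 'M[R]_(nT, M)) (Wd : 'M[R]_(M, nT))
  (k : 'I_nT) : 'cV[R]_d :=
  tauhat theta0 theta We Wd k - tau theta0 theta k.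

From HB Require Import structures.
From mathcomp Require Import all_boot all_order all_algebra.
From mathcomp Require Import all_classical all_reals all_analysis.
From mathcomp Require Import ring lra.
Import Order.TTheory GRing.Theory Num.Theory.
Import numFieldNormedType.Exports.
Local Open Scope ring_scope.

(* Write x := theta_Neg - theta_j = -(alpha tau_i + tau_j + alpha e_i).  Both
   theta_Neg and theta_0 lie in the smoothness ball around the stationary point
   theta_j, so L_j(theta_Neg) - L_j(theta_0) <= L_j/2 (|x|^2 + |tau_j|^2).  Then
   |x|^2 <= 2 |alpha tau_i + tau_j|^2 + 2 |e_i|^2, and near-orthogonality gives
   |alpha tau_i + tau_j|^2 <= 2 (1 + eps) C. *)

Section EuclideanGeometry.
Context {R : realType} {d : nat}.
Implicit Types (u v w : 'cV[R]_d) (a : R).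

Lemma dotvC u v : dotv u v = dotv v u.
Proof. by apply: eq_bigr => k _; rewrite mulrC. Qed.

Lemma dotvDl u v w : dotv (u + v) w = dotv u w + dotv v w.
Proof. by rewrite /dotv -big_split; apply: eq_bigr => k _; rewrite !mxE mulrDl. Qed.

Lemma dotvZl a u w : dotv (a *: u) w = a * dotv u w.
Proof. by rewrite /dotv mulr_sumr; apply: eq_bigr => k _; rewrite !mxE mulrA. Qed.

Lemma dotvNl u w : dotv (- u) w = - dotv u w.
Proof. by rewrite -scaleN1r dotvZl mulN1r. Qed.

Lemma dotvDr u v w : dotv w (u + v) = dotv w u + dotv w v.
Proof. by rewrite dotvC dotvDl !(dotvC w). Qed.

Lemma dotvZr a u w : dotv w (a *: u) = a * dotv w u.
Proof. by rewrite dotvC dotvZl dotvC. Qed.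

Lemma dotvNr u w : dotv w (- u) = - dotv w u.
Proof. by rewrite dotvC dotvNl dotvC. Qed.

Lemma dotv0l u : dotv 0 u = 0.
Proof. by rewrite -(scale0r 0) dotvZl mul0r. Qed.

Lemma dotv0r u : dotv u 0 = 0.
Proof. by rewrite dotvC dotv0l. Qed.

Lemma dotv_ge0 u : 0 <= dotv u u.
Proof. by apply: sumr_ge0 => k _; rewrite -expr2 sqr_ge0. Qed.

Lemma enorm_ge0 u : 0 <= enorm u.
Proof. exact: sqrtr_ge0. Qed.

Lemma enorm_sqr u : enorm u ^+ 2 = dotv u u.
Proof. by rewrite sqr_sqrtr // dotv_ge0. Qed.

Lemma enormN u : enorm (- u) = enorm u.
Proof. by rewrite /enorm dotvNl dotvNr opprK. Qed.

Lemma enormZ a u : enorm (a *: u) = `|a| * enorm u.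
Proof.
by rewrite /enorm dotvZl dotvZr mulrA -expr2 sqrtrM ?sqr_ge0 // sqrtr_sqr.
Qed.

Lemma enorm_eq0 {u} : enorm u = 0 -> u = 0.
Proof.
move/eqP; rewrite sqrtr_eq0 => u2_le0.
have /eqP u2_0 : dotv u u == 0 by rewrite eq_le u2_le0 dotv_ge0.
have sqr_entry_ge0 k : true -> 0 <= u k ord0 * u k ord0 by rewrite -expr2 sqr_ge0.
have /(psumr_eq0P sqr_entry_ge0) sq0 := u2_0.
apply/matrixP => k l; rewrite ord1 mxE.
by apply/eqP; rewrite -[_ == 0]orbb -mulf_eq0 sq0.
Qed.

Lemma enorm_le_sqrt {u a} : enorm u ^+ 2 <= a -> enorm u <= Num.sqrt a.
Proof. by rewrite enorm_sqr => /ler_wsqrtr. Qed.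

(* The degenerate cases force a vector to vanish; otherwise expand
   0 <= |(|v| u - |u| v)|^2 = 2 |u| |v| (|u| |v| - <u, v>). *)
Lemma dotv_le_enorm u v : dotv u v <= enorm u * enorm v.
Proof.
have [u0|u0] := eqVneq (enorm u) 0; first by rewrite u0 mul0r (enorm_eq0 u0) dotv0l.
have [v0|v0] := eqVneq (enorm v) 0; first by rewrite v0 mulr0 (enorm_eq0 v0) dotv0r.
have uv_gt0 : 0 < enorm u * enorm v by rewrite mulr_gt0 ?lt_def ?u0 ?v0 ?enorm_ge0.
have := dotv_ge0 (enorm v *: u - enorm u *: v).
rewrite !(dotvDl, dotvDr, dotvNl, dotvNr, dotvZl, dotvZr) (dotvC v u).
rewrite -!enorm_sqr => h; nra.
Qed.

Lemma ler_enormD u v : enorm (u + v) <= enorm u + enorm v.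
Proof.
rewrite -(ger0_norm (addr_ge0 (enorm_ge0 u) (enorm_ge0 v))) -sqrtr_sqr.
apply: ler_wsqrtr; rewrite dotvDl !dotvDr (dotvC v u) -!enorm_sqr.
have := dotv_le_enorm u v; lra.
Qed.

Lemma enorm_sqrD_le u v : enorm (u + v) ^+ 2 <= 2 * (enorm u ^+ 2 + enorm v ^+ 2).
Proof.
have := dotv_ge0 (u - v).
rewrite !enorm_sqr !(dotvDl, dotvDr, dotvNl, dotvNr) (dotvC v u); lra.
Qed.

(* Near-orthogonality bounds the cross term 2 a <u, v> by 2 eps C, using
   |u| |v| <= (|u|^2 + |v|^2) / 2 <= C. *)
Lemma enorm_sqr_scaleD_le a eps C u v :
  0 <= a <= 1 -> 0 <= eps ->
  enorm u ^+ 2 <= C -> enorm v ^+ 2 <= C ->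
  `|dotv u v| <= eps * enorm u * enorm v ->
  enorm (a *: u + v) ^+ 2 <= 2 * (1 + eps) * C.
Proof.
move=> /andP[a0 a1] eps0 uC vC; rewrite ler_norml => /andP[_ uv_le].
have uv_C : enorm u * enorm v <= C.
  have := sqr_ge0 (enorm u - enorm v); lra.
have cross : a * dotv u v <= eps * C.
  have [uv0|uv0] := lerP 0 (dotv u v).
    apply: le_trans (ler_piMl uv0 a1) (le_trans uv_le _).
    by rewrite -mulrA ler_wpM2l.
  have : 0 <= eps * C by apply: mulr_ge0 => //; apply: le_trans uC; apply: sqr_ge0.
  have : a * dotv u v <= 0 by rewrite mulr_ge0_le0 // ltW.
  lra.
have a2_le1 : a ^+ 2 <= 1 by rewrite expr_le1.
rewrite enorm_sqr !(dotvDl, dotvDr, dotvZl, dotvZr) (dotvC v u) -!enorm_sqr.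
have : a ^+ 2 * enorm u ^+ 2 <= C.
  by apply: le_trans uC; rewrite ler_piMl ?sqr_ge0.
lra.
Qed.

Lemma enorm_scaleDD_le a u v w :
  0 <= a <= 1 -> enorm (a *: u + v + a *: w) <= enorm u + enorm v + enorm w.
Proof.
move=> /andP[a0 a1]; apply: le_trans (ler_enormD _ _) _.
apply: le_trans (lerD (ler_enormD _ _) (lexx _)) _.
rewrite !enormZ ger0_norm //.
have := ler_piMl (enorm_ge0 u) a1; have := ler_piMl (enorm_ge0 w) a1; lra.
Qed.

Lemma enorm_sqr_scaleDD_le a eps C u v w :
  0 <= a <= 1 -> 0 <= eps ->
  enorm u ^+ 2 <= C -> enorm v ^+ 2 <= C ->
  `|dotv u v| <= eps * enorm u * enorm v ->
  enorm (a *: u + v + a *: w) ^+ 2 <= 4 * (1 + eps) * C + 2 * enorm w ^+ 2.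
Proof.
move=> a01 eps0 uC vC uv_le; have /andP[a0 a1] := a01.
have uv_sqr : enorm (a *: u + v) ^+ 2 <= 2 * (1 + eps) * C.
  exact: enorm_sqr_scaleD_le.
have w_sqr : (a * enorm w) ^+ 2 <= enorm w ^+ 2.
  by rewrite exprMn ler_piMl ?sqr_ge0 // expr_le1.
have := enorm_sqrD_le (a *: u + v) (a *: w).
rewrite enormZ ger0_norm //; lra.
Qed.

Lemma stationary_diff_le {f : 'cV[R]_d -> R} {p : 'cV[R]_d} {K r : R} x y :
  (forall z, enorm (z - p) <= r ->
     `| f z - f p - dotv (z - p) (grad f p) | <= K / 2 * enorm (z - p) ^+ 2) ->
  grad f p = 0 -> enorm (x - p) <= r -> enorm (y - p) <= r ->
  f x - f y <= K / 2 * (enorm (x - p) ^+ 2 + enorm (y - p) ^+ 2).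
Proof.
move=> smooth gradp0 xr yr.
move: (smooth x xr) (smooth y yr); rewrite gradp0 !dotv0r !subr0.
by rewrite !ler_norml mulrDr => /andP[_ hx] /andP[hy _]; lra.
Qed.

End EuclideanGeometry.

Theorem mainTheorem8 (R : realType) (d nT M : nat)
  (theta0 : 'cV[R]_d) (theta : 'I_nT -> 'cV[R]_d)
  (L : 'I_nT -> 'cV[R]_d -> R) (Lc : 'I_nT -> R) (C r eps : R)
  (We : 'M[R]_(nT, M)) (Wd : 'M[R]_(M, nT)) (i : 'I_nT) (alpha : R) :
  (* each loss is differentiable *)
  (forall k (x : 'cV[R]_d), differentiable (L k) x) ->
  (* fine-tuning regime *)
  (forall k, grad (L k) (theta k) = 0) ->
  0 < C ->
  (forall k, enorm (tau theta0 theta k) ^+ 2 <= C) ->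
  (* local smoothness with radius r *)
  0 < r ->
  (forall k, 0 <= Lc k) ->
  (forall k (th : 'cV[R]_d), enorm (th - theta k) <= r ->
     `| L k th - L k (theta k) - dotv (th - theta k) (grad (L k) (theta k)) |
       <= Lc k / 2 * enorm (th - theta k) ^+ 2) ->
  (* near-orthogonality of task vectors *)
  0 < eps <= 1 ->
  (forall k l, k != l ->
     `| dotv (tau theta0 theta k) (tau theta0 theta l) |
       <= eps * enorm (tau theta0 theta k) * enorm (tau theta0 theta l)) ->
  0 <= alpha <= 1 ->
  2 * Num.sqrt C + enorm (colerr theta0 theta We Wd i) <= r ->
  forall j, j != i ->
    L j (theta0 - alpha *: tauhat theta0 theta We Wd i) - L j theta0
      <= Lc j * C * (5 / 2 + 2 * eps)
         + Lc j * enorm (colerr theta0 theta We Wd i) ^+ 2.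
Proof.
move=> _ grad0 _ tauC _ Lc0 smooth /andP[eps0 _] orth a01 er j ji.
set ti := tau theta0 theta i; set tj := tau theta0 theta j.
set e := colerr theta0 theta We Wd i.
set neg := theta0 - alpha *: tauhat theta0 theta We Wd i.
set x := alpha *: ti + tj + alpha *: e.
have neg_j : neg - theta j = - x.
  rewrite /neg /x /e /colerr /ti /tj /tau.
  by apply/matrixP => a b; rewrite !mxE; ring.
have zero_j : theta0 - theta j = - tj by rewrite opprB.
have [tiC tjC] := (enorm_le_sqrt (tauC i), enorm_le_sqrt (tauC j)).
have x_le : enorm x <= r.
  by apply: le_trans (enorm_scaleDD_le _ ti tj e a01) _; lra.
have tj_le : enorm tj <= r.
  by have := sqrtr_ge0 C; have := enorm_ge0 e; lra.
have := stationary_diff_le neg theta0 (smooth j) (grad0 j).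
rewrite neg_j zero_j !enormN => /(_ x_le tj_le) /le_trans; apply.
have x_sqr : enorm x ^+ 2 <= 4 * (1 + eps) * C + 2 * enorm e ^+ 2.
  apply: enorm_sqr_scaleDD_le; rewrite ?tauC ?(ltW eps0) //.
  by apply: orth; rewrite eq_sym.
have sum_le : enorm x ^+ 2 + enorm tj ^+ 2 <= 5 * C + 4 * eps * C + 2 * enorm e ^+ 2.
  by have := tauC j; lra.
have -> : Lc j * C * (5 / 2 + 2 * eps) + Lc j * enorm e ^+ 2
          = Lc j / 2 * (5 * C + 4 * eps * C + 2 * enorm e ^+ 2) by field.
by rewrite ler_wpM2l // divr_ge0.
Qed.
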